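(* Let $R$ be an associative $\mathbb{C}$-algebra and $W$ a left $R$-module. Let $M=(M_{ij})_{0\leq i,j\leq N}$ be an almost triangular matrix with entries in $R$, and let $\xi=(\xi_0,\ldots,\xi_N)^T\in W^{N+1}$ satisfy $M\xi=0$. Then $\det_{\mathrm{right}}(M^\tau)\,\xi_N=0$.
   Context: Almost triangular matrix. A matrix $M$ is almost triangular if $M_{ij}=0$ whenever $i>j+1$ and $M_{i+1,i}=-1$ for all $i$. Anti-diagonal transpose. $M^\tau$ denotes the matrix with $M^\tau_{ij}=M_{N-j,N-i}$. Right determinant. For a square matrix $X=(X_{ij})_{0\leq i,j\leq m}$ over $R$: - if $m=0$, $\det_{\mathrm{right}}X=X_{00}$; - otherwise $\det_{\mathrm{right}}X=\sum_{i=0}^mX_{im}C_{im}$, where $C_{im}=(-1)^{i+m}\det_{\mathrm{right}}X^{(i,m)}$, $X^{(i,m)}$ is $X$ with row $i$ and column $m$ deleted, and products are taken in the order written. *)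

From HB Require Import structures.
From mathcomp Require Import all_boot all_order all_algebra.
From mathcomp Require Import reals complex.
Set Implicit Arguments. Unset Strict Implicit. Unset Printing Implicit Defensive.
Import Order.TTheory GRing.Theory Num.Theory.
Local Open Scope ring_scope.

(* Matrices indexed by 0..N are 'M[R]_(N.+1). *)

Definition almost_triangular (R : pzRingType) (N : nat) (M : 'M[R]_N.+1) : Prop :=
  (forall i j : 'I_N.+1, (j.+1 < i)%N -> M i j = 0) /\
  (forall i j : 'I_N.+1, (i : nat) = j.+1 -> M i j = -1).

Definition antitr (R : Type) (N : nat) (M : 'M[R]_N.+1) : 'M[R]_N.+1 :=
  \matrix_(i, j) M (rev_ord j) (rev_ord i).

(* right determinant, expansion along the last column, products in the written order *)
Fixpoint detr (R : pzRingType) (m : nat) : 'M[R]_m.+1 -> R :=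
  match m return 'M[R]_m.+1 -> R with
  | 0 => fun X => X ord0 ord0
  | m'.+1 => fun X =>
      \sum_(i < m'.+2)
        X i ord_max * ((-1) ^+ (i + m'.+1) * detr (row' i (col' ord_max X)))
  end.

From HB Require Import structures.
From mathcomp Require Import all_boot all_order all_algebra.
From mathcomp Require Import reals complex.
From mathcomp Require Import zify.
Set Implicit Arguments. Unset Strict Implicit. Unset Printing Implicit Defensive.
Import GRing.Theory Num.Theory.
Local Open Scope ring_scope.

(* Reverse the unknowns, y_k := xi_(N-k), and put X := M^tau.  Since
   X_(k+1,k) = -1, column k of X turns M xi = 0 into the recurrence
   y_(k+1) = sum_(i <= k) X_ik y_i.  By induction on the size, each cofactor
   C_(i,m) of the last column of X multiplies y_0 to y_i: for i < m the minor has
   last row -e_m, and expanding along it leaves the corresponding cofactor of the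
   leading block.  Expanding det_right X along its last column therefore gives
   det_right X y_0 = sum_i X_(i,N) y_i, which vanishes by the last column's
   equation. *)

Section ColumnRecurrence.
Variables (R : pzRingType) (W : lmodType R).

Definition lead_block m (X : 'M[R]_m.+2) : 'M[R]_m.+1 := row' ord_max (col' ord_max X).

Definition rcofactor m (X : 'M[R]_m.+2) (i : 'I_m.+2) : R :=
  (-1) ^+ (i + m.+1) * detr (row' i (col' ord_max X)).

Lemma detr_expand_last_col m (X : 'M[R]_m.+2) :
  detr X = \sum_(i < m.+2) X i ord_max * rcofactor X i.
Proof. by []. Qed.

Lemma detr_eq0_row m (X : 'M[R]_m.+1) r : (forall c, X r c = 0) -> detr X = 0.
Proof.
elim: m X r => [|m IH] X r Xr0 /=; first by rewrite (ord1 r) in Xr0; apply: Xr0.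
rewrite big1 // => i _.
case: (unliftP i r) Xr0 => [r' ->|->] Xr0; last by rewrite Xr0 mul0r.
by rewrite (IH _ r') ?mulr0 // => c; rewrite !mxE Xr0.
Qed.

Lemma val_lift_max n (i : 'I_n) : val (lift ord_max i) = i.
Proof. by rewrite /= /bump leqNgt ltn_ord. Qed.

Lemma detr_last_row_diag n (Y : 'M[R]_n.+2) :
  (forall c : 'I_n.+2, c != ord_max -> Y ord_max c = 0) ->
  detr Y = Y ord_max ord_max * detr (lead_block Y).
Proof.
move=> Ylast; rewrite detr_expand_last_col big_ord_recr /= big1 ?add0r.
  by rewrite /rcofactor -signr_odd addnn odd_double expr0 mul1r.
move=> i _; rewrite /rcofactor (@detr_eq0_row _ _ ord_max) ?mulr0 // => c.
rewrite !mxE; have -> : lift (widen_ord (leqnSn n.+1) i) ord_max = ord_max.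
  by apply/val_inj; rewrite /= /bump; have := ltn_ord i; lia.
apply: Ylast; apply/eqP => /(congr1 val) /=; rewrite /bump.
by have := ltn_ord c; lia.
Qed.

Lemma almost_triangular_lead m (X : 'M[R]_m.+2) :
  almost_triangular X -> almost_triangular (lead_block X).
Proof.
by case=> X0 Xsub; split=> i j h; rewrite !mxE; [apply: X0 | apply: Xsub];
  rewrite !val_lift_max.
Qed.

(* The extra entry y_(m+1) records the value forced by the last column. *)
Definition column_recurrence m (X : 'M[R]_m.+1) (y : nat -> W) :=
  forall k : 'I_m.+1,
    \sum_(i < m.+1) X i k *: y i = if k == ord_max then y m.+1 else 0.

Lemma column_recurrence_lead m (X : 'M[R]_m.+2) y :
  almost_triangular X -> column_recurrence X y ->
  column_recurrence (lead_block X) y.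
Proof.
case=> X0 Xsub Xy k; have := Xy (lift ord_max k).
rewrite big_ord_recr /=.
have -> : (lift ord_max k == ord_max) = false.
  by apply/negbTE/eqP => /(congr1 val); rewrite val_lift_max /=; have := ltn_ord k; lia.
rewrite (eq_bigr (fun i : 'I_m.+1 => lead_block X i k *: y i)); last first.
  move=> i _; rewrite !mxE; congr (X _ _ *: _).
  by apply/val_inj; rewrite val_lift_max.
case: eqP => [->|k_max] col_k.
  rewrite Xsub ?val_lift_max // in col_k.
  by apply/eqP; rewrite -subr_eq0 -scaleN1r col_k.
rewrite X0 ?scale0r ?addr0 // in col_k.
have : (k : nat) != m by apply/eqP => e; apply: k_max; apply/val_inj.
by rewrite val_lift_max /=; have := ltn_ord k; lia.
Qed.

Definition detr_law m := forall X : 'M[R]_m.+1, almost_triangular X ->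
  forall y, column_recurrence X y -> detr X *: y 0%N = y m.+1.

Definition rcofactor_law m := forall X : 'M[R]_m.+2, almost_triangular X ->
  forall y, column_recurrence X y -> forall i, rcofactor X i *: y 0%N = y i.

Lemma detr_law0 : detr_law 0.
Proof. by move=> X _ y /(_ ord0); rewrite big_ord1. Qed.

Lemma detr_lawS m : rcofactor_law m -> detr_law m.+1.
Proof.
move=> cofE X Xat y Xy; have := Xy ord_max; rewrite eqxx => <-.
rewrite detr_expand_last_col scaler_suml; apply: eq_bigr => i _.
by rewrite -scalerA cofE.
Qed.

Lemma rcofactor_law_max m (X : 'M[R]_m.+2) y :
  detr_law m -> almost_triangular X -> column_recurrence X y ->
  rcofactor X ord_max *: y 0%N = y m.+1.
Proof.
move=> detE Xat Xy; rewrite /rcofactor -signr_odd oddD /= addbb expr0 mul1r.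
by apply: detE; [apply: almost_triangular_lead | apply: column_recurrence_lead].
Qed.

Lemma rcofactor_law0 : rcofactor_law 0.
Proof.
move=> X Xat y Xy i.
case: (unliftP ord_max i) => [j ->|->]; last first.
  by apply: rcofactor_law_max => //; apply: detr_law0.
rewrite (ord1 j) /rcofactor /=.
have -> : lift ord_max (@ord0 0) = ord0 by apply/val_inj.
by rewrite !mxE (proj2 Xat) // expr1 mulN1r opprK scale1r.
Qed.

(* Deleting row i < m+2 leaves a minor whose last row is -e_(m+1); expanding
   along it reduces to the minor of the leading block with row i deleted. *)
Lemma rcofactor_lift m (X : 'M[R]_m.+3) (j : 'I_m.+2) :
  almost_triangular X ->
  rcofactor X (lift ord_max j) = rcofactor (lead_block X) j.
Proof.
case=> X0 Xsub; rewrite /rcofactor; set Y := row' (lift _ _) _.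
have lift_max : lift (lift ord_max j) ord_max = ord_max.
  by apply/val_inj; rewrite /= /bump; have := ltn_ord j; lia.
rewrite (@detr_last_row_diag _ Y); last first.
  move=> c c_max; rewrite /Y !mxE lift_max X0 //.
  have : (c : nat) != m.+1 by apply/eqP => e; move/eqP: c_max; apply; apply/val_inj.
  by rewrite val_lift_max /=; have := ltn_ord c; lia.
have -> : Y ord_max ord_max = -1 by rewrite /Y !mxE lift_max Xsub // val_lift_max.
have -> : lead_block Y = row' j (col' ord_max (lead_block X)).
  apply/matrixP => r c; rewrite !mxE; congr (X _ _).
  by apply/val_inj; rewrite /= /bump; have := ltn_ord r; have := ltn_ord j; lia.
by rewrite val_lift_max !addnS !exprS !mulN1r mulNr mulrN opprK.
Qed.

Lemma rcofactor_lawS m : rcofactor_law m -> rcofactor_law m.+1.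
Proof.
move=> cofE X Xat y Xy i.
case: (unliftP ord_max i) => [j ->|->].
  rewrite rcofactor_lift // cofE ?val_lift_max //.
    exact: almost_triangular_lead.
  exact: column_recurrence_lead.
by apply: rcofactor_law_max => //; apply: detr_lawS.
Qed.

Lemma detr_column_recurrence m (X : 'M[R]_m.+1) (y : nat -> W) :
  almost_triangular X -> column_recurrence X y -> detr X *: y 0%N = y m.+1.
Proof.
case: m X => [|m] X Xat Xy; first exact: (detr_law0 Xat Xy).
have cofE : rcofactor_law m.
  by elim: {X Xat Xy}m => [|m]; [exact: rcofactor_law0 | exact: rcofactor_lawS].
exact: (detr_lawS cofE Xat Xy).
Qed.

End ColumnRecurrence.

Lemma almost_triangular_antitr (R : pzRingType) N (M : 'M[R]_N.+1) :
  almost_triangular M -> almost_triangular (antitr M).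
Proof.
case=> M0 Msub; split=> i j h; rewrite !mxE; [apply: M0 | apply: Msub] => /=;
  by have := ltn_ord i; have := ltn_ord j; lia.
Qed.

Theorem lemma1p1p4 (Rr : realType) (R : algType (Rr[i])) (W : lmodType R)
    (N : nat) (M : 'M[R]_N.+1) (xi : 'I_N.+1 -> W) :
  almost_triangular M ->
  (forall i : 'I_N.+1, \sum_(j < N.+1) M i j *: xi j = 0) ->
  detr (antitr M) *: xi ord_max = 0.
Proof.
move=> Mat Mxi.
pose y n := if (n <= N)%N then xi (inord (N - n)) else (0 : W).
have yE (i : 'I_N.+1) : y i = xi (rev_ord i).
  rewrite /y -ltnS ltn_ord; congr xi; apply/val_inj.
  by rewrite /= inordK //; have := ltn_ord i; lia.
have y_out : y N.+1 = 0 by rewrite /y ltnn.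
have y_rec : column_recurrence (antitr M) y.
  move=> k; have := Mxi (rev_ord k); rewrite (reindex_inj rev_ord_inj) /= => Mk.
  rewrite y_out if_same -[RHS]Mk.
  by apply: eq_bigr => i _; rewrite !mxE yE.
have y0 : y 0%N = xi ord_max.
  by rewrite (yE ord0); congr xi; apply/val_inj; rewrite /= subSS subn0.
by rewrite -y0 (detr_column_recurrence (almost_triangular_antitr Mat) y_rec).
Qed.
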